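(* Let $g\in\mathbb{R}^n$ be nonzero, $H\in\mathbb{S}^n$, $\epsilon>0$, $\delta>0$, $\zeta\in(0,1)$, and let $k_{\max}$ be any iteration limit. The step $s$ returned by Algorithm 2 (described in the context) satisfies \[ g^Ts+\tfrac12 s^THs\ \le\ -\tfrac12\,\epsilon\,\|s\|^2 . \]
   Context: $\mathbb{S}^n$ is the set of real symmetric $n\times n$ matrices, $\|\cdot\|$ the Euclidean norm; all computations are in exact arithmetic. Algorithm 2 (truncated CG for $\min_s g^Ts+\tfrac12 s^T(H+2\epsilon I)s$ s.t. $\|s\|\le\delta$): inputs nonzero $g$, $H\in\mathbb{S}^n$, $\epsilon>0$, $\delta>0$, $\zeta\in(0,1)$, and an iteration limit $k_{\max}\le n$ (either $n$ or a smaller cap). Set $y_0=0$, $r_0=g$, $p_0=-g$, $j=0$. While $j<k_{\max}$: (a) if $p_j^T(H+2\epsilon I)p_j\le\epsilon\|p_j\|^2$, compute $\sigma\ge0$ with $\|y_j+\sigma p_j\|=\delta$ and return $s=y_j+\sigma p_j$ with flag BND-NEG; (b) set $\alpha_j=\|r_j\|^2/(p_j^T(H+2\epsilon I)p_j)$ and $y_{j+1}=y_j+\alpha_jp_j$; if $\|y_{j+1}\|\ge\delta$, compute $\sigma\ge0$ with $\|y_j+\sigma p_j\|=\delta$ and return $s=y_j+\sigma p_j$ with flag BND-NORM; (c) set $r_{j+1}=r_j+\alpha_j(H+2\epsilon I)p_j$; if $\|r_{j+1}\|\le\tfrac{\zeta}{2}\min\{\|g\|,\epsilon\|y_{j+1}\|\}$,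 return $s=y_{j+1}$ with flag INT-RES; (d) set $\beta_{j+1}=\|r_{j+1}\|^2/\|r_j\|^2$, $p_{j+1}=-r_{j+1}+\beta_{j+1}p_j$, $j\leftarrow j+1$. If the loop exits, return the current iterate $s=y_j$ with flag INT-MAX. *)

From HB Require Import structures.
From mathcomp Require Import all_boot all_order all_algebra.
Set Implicit Arguments. Unset Strict Implicit. Unset Printing Implicit Defensive.
Import Order.TTheory GRing.Theory Num.Theory.
Local Open Scope ring_scope.

Section Alg2.
Variables (R : rcfType) (n : nat).

Definition dotv (u v : 'cV[R]_n) : R := (u^T *m v) 0 0.
Definition normv (u : 'cV[R]_n) : R := Num.sqrt (dotv u u).

Variables (g : 'cV[R]_n) (H : 'M[R]_n) (eps delta zeta : R).

Definition Heps : 'M[R]_n := H + (2 * eps)%:M.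

Record cgstate := CGState { cg_y : 'cV[R]_n; cg_r : 'cV[R]_n; cg_p : 'cV[R]_n }.

Definition cg_alpha (st : cgstate) : R :=
  normv (cg_r st) ^+ 2 / dotv (cg_p st) (Heps *m cg_p st).
Definition cg_ynext (st : cgstate) : 'cV[R]_n :=
  cg_y st + cg_alpha st *: cg_p st.
Definition cg_rnext (st : cgstate) : 'cV[R]_n :=
  cg_r st + cg_alpha st *: (Heps *m cg_p st).
Definition cg_step (st : cgstate) : cgstate :=
  let r' := cg_rnext st in
  let beta := normv r' ^+ 2 / normv (cg_r st) ^+ 2 in
  CGState (cg_ynext st) r' (- r' + beta *: cg_p st).

Definition cg_iter (j : nat) : cgstate := iter j cg_step (CGState 0 g (- g)).

(* termination tests (a), (b), (c) of Algorithm 2 at a state *)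
Definition test_neg (st : cgstate) : Prop :=
  dotv (cg_p st) (Heps *m cg_p st) <= eps * normv (cg_p st) ^+ 2.
Definition test_norm (st : cgstate) : Prop := normv (cg_ynext st) >= delta.
Definition test_res (st : cgstate) : Prop :=
  normv (cg_rnext st) <= zeta / 2 * Num.min (normv g) (eps * normv (cg_ynext st)).

Definition no_stop (st : cgstate) : Prop :=
  ~ test_neg st /\ ~ test_norm st /\ ~ test_res st.

Definition bnd_step (st : cgstate) (s : 'cV[R]_n) : Prop :=
  exists sigma : R, 0 <= sigma /\ s = cg_y st + sigma *: cg_p st /\ normv s = delta.

Definition stop_with (st : cgstate) (s : 'cV[R]_n) : Prop :=
  (test_neg st /\ bnd_step st s)
  \/ (~ test_neg st /\ test_norm st /\ bnd_step st s)
  \/ (~ test_neg st /\ ~ test_norm st /\ test_res st /\ s = cg_ynext st).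

Definition alg2_returns (kmax : nat) (s : 'cV[R]_n) : Prop :=
  (exists j, (j < kmax)%N /\ (forall i, (i < j)%N -> no_stop (cg_iter i))
             /\ stop_with (cg_iter j) s)
  \/ ((forall i, (i < kmax)%N -> no_stop (cg_iter i)) /\ s = cg_y (cg_iter kmax)).

End Alg2.

(* With A := H + 2 eps I the claim reads g^T s + s^T A s / 2 <= eps ||s||^2 / 2.
   While the CG recursion is well defined (p_i^T A p_i > 0 and r_i <> 0), the
   residuals are orthogonal to the earlier directions and the directions are
   A-conjugate; hence r_k = g + A y_k is orthogonal to y_k, p_k is A-orthogonal
   to y_k, and y_k^T p_k >= 0.  Every returned step is s = y_k + sigma p_k with
   sigma >= 0, and then
     g^T s + s^T A s / 2 = - y_k^T A y_k / 2 - sigma ||r_k||^2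
                           + sigma^2 p_k^T A p_k / 2.
   The last term is at most eps sigma^2 ||p_k||^2 / 2 <= eps ||s||^2 / 2 when
   p_k has curvature at most eps, and at most sigma ||r_k||^2 / 2 when
   sigma <= alpha_k.  A boundary step has sigma <= alpha_k because
   ||y_k + t p_k|| increases with t >= 0. *)

From HB Require Import structures.
From mathcomp Require Import all_boot all_order all_algebra.
From mathcomp Require Import ring lra.
Import Order.TTheory GRing.Theory Num.Theory.
Local Open Scope ring_scope.
Set Implicit Arguments.
Unset Strict Implicit.

Section InnerProduct.
Variables (R : rcfType) (n : nat).
Implicit Types (u v w : 'cV[R]_n) (M : 'M[R]_n).

Lemma dotvE u v : dotv u v = \sum_i u i 0 * v i 0.
Proof. by rewrite /dotv mxE; apply: eq_bigr => i _; rewrite mxE. Qed.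

Lemma dotvC u v : dotv u v = dotv v u.
Proof. by rewrite !dotvE; apply: eq_bigr => i _; rewrite mulrC. Qed.

Lemma dotvDr u v w : dotv u (v + w) = dotv u v + dotv u w.
Proof. by rewrite /dotv mulmxDr mxE. Qed.

Lemma dotvDl u v w : dotv (v + w) u = dotv v u + dotv w u.
Proof. by rewrite dotvC dotvDr !(dotvC u). Qed.

Lemma dotvZr a u v : dotv u (a *: v) = a * dotv u v.
Proof. by rewrite /dotv -scalemxAr mxE. Qed.

Lemma dotvZl a u v : dotv (a *: u) v = a * dotv u v.
Proof. by rewrite dotvC dotvZr dotvC. Qed.

Lemma dotvNr u v : dotv u (- v) = - dotv u v.
Proof. by rewrite -scaleN1r dotvZr mulN1r. Qed.

Lemma dotvNl u v : dotv (- u) v = - dotv u v.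
Proof. by rewrite dotvC dotvNr dotvC. Qed.

Lemma dotv0r u : dotv u 0 = 0.
Proof. by rewrite /dotv mulmx0 mxE. Qed.

Lemma dotv0l u : dotv 0 u = 0.
Proof. by rewrite dotvC dotv0r. Qed.

Lemma dotvvE u : dotv u u = \sum_i u i 0 ^+ 2.
Proof. by rewrite dotvE; apply: eq_bigr => i _; rewrite expr2. Qed.

Lemma dotvv_ge0 u : 0 <= dotv u u.
Proof. by rewrite dotvvE sumr_ge0 // => i _; rewrite sqr_ge0. Qed.

Lemma dotvv_gt0 u : (0 < dotv u u) = (u != 0).
Proof.
rewrite lt_def dotvv_ge0 andbT; congr negb; apply/idP/eqP => [|->]; last first.
  by rewrite dotv0r.
rewrite dotvvE psumr_eq0 => [/allP u0|i _]; last exact: sqr_ge0.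
apply/matrixP => i j; rewrite ord1 mxE.
by apply/eqP; rewrite -sqrf_eq0; apply: implyP (u0 i (mem_index_enum i)) _.
Qed.

Lemma normv_ge0 u : 0 <= normv u.
Proof. exact: sqrtr_ge0. Qed.

Lemma normv_sqr u : normv u ^+ 2 = dotv u u.
Proof. by rewrite sqr_sqrtr // dotvv_ge0. Qed.

Lemma dotv_trmx M u v : dotv u (M *m v) = dotv (M^T *m u) v.
Proof. by rewrite /dotv trmx_mul trmxK mulmxA. Qed.

Lemma dotv_sym M u v : M^T = M -> dotv u (M *m v) = dotv v (M *m u).
Proof. by move=> symM; rewrite dotv_trmx symM dotvC. Qed.

Lemma dotvDZ M u v t : M^T = M ->
  dotv (u + t *: v) (M *m (u + t *: v))
  = dotv u (M *m u) + 2 * t * dotv v (M *m u) + t ^+ 2 * dotv v (M *m v).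
Proof.
move=> symM; rewrite mulmxDr -scalemxAr !(dotvDl, dotvDr, dotvZl, dotvZr).
by rewrite (dotv_sym _ u) //; ring.
Qed.

Lemma dotvvDZ u v t :
  dotv (u + t *: v) (u + t *: v) = dotv u u + 2 * t * dotv v u + t ^+ 2 * dotv v v.
Proof. by have := @dotvDZ 1%:M u v t (tr_scalar_mx n 1); rewrite !mul1mx. Qed.

End InnerProduct.

Section ConjugateGradient.
Variables (R : rcfType) (n : nat) (g : 'cV[R]_n) (H : 'M[R]_n) (eps : R).
Hypothesis symH : H^T = H.

Local Notation A := (Heps H eps).
(* Locked, so that rewriting cannot unfold the iteration into the recursion. *)
Fact cg_state_key : unit. Proof. by []. Qed.
Definition cg_state k := locked_with cg_state_key (cg_iter g H eps k).

Lemma cg_stateE k : cg_state k = cg_iter g H eps k.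
Proof. exact: unlock. Qed.

Lemma cg_stateS k : cg_state k.+1 = cg_step H eps (cg_state k).
Proof. by rewrite !cg_stateE. Qed.

Local Notation st k := (cg_state k).
Local Notation y k := (cg_y (st k)).
Local Notation r k := (cg_r (st k)).
Local Notation p k := (cg_p (st k)).
Local Notation rho k := (dotv (r k) (r k)).
Local Notation pAp k := (dotv (p k) (A *m p k)).
Local Notation alpha k := (rho k / pAp k).

Lemma trmx_Heps : A^T = A.
Proof. by rewrite /Heps linearD /= symH tr_scalar_mx. Qed.

Lemma dotv_Heps u v : dotv u (A *m v) = dotv v (A *m u).
Proof. exact/dotv_sym/trmx_Heps. Qed.

Lemma cg_y0 : y 0 = 0. Proof. by rewrite cg_stateE. Qed.
Lemma cg_r0 : r 0 = g. Proof. by rewrite cg_stateE. Qed.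
Lemma cg_p0 : p 0 = - g. Proof. by rewrite cg_stateE. Qed.

Lemma cg_yS k : y k.+1 = y k + alpha k *: p k.
Proof. by rewrite cg_stateS /= /cg_ynext /cg_alpha normv_sqr. Qed.

Lemma cg_rS k : r k.+1 = r k + alpha k *: (A *m p k).
Proof. by rewrite cg_stateS /= /cg_rnext /cg_alpha normv_sqr. Qed.

Lemma cg_pS k : p k.+1 = - r k.+1 + (rho k.+1 / rho k) *: p k.
Proof. by rewrite [in LHS]cg_stateS /= !normv_sqr cg_stateS. Qed.

Lemma cg_rE k : r k = g + A *m y k.
Proof.
elim: k => [|k IHk]; first by rewrite cg_r0 cg_y0 mulmx0 addr0.
by rewrite cg_rS cg_yS IHk mulmxDr -scalemxAr addrA.
Qed.

Lemma dotv_cg_y_eq0 u k : (forall i, (i < k)%N -> dotv u (p i) = 0) -> dotv u (y k) = 0.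
Proof.
elim: k => [|k IHk] u_p; first by rewrite cg_y0 dotv0r.
rewrite cg_yS dotvDr dotvZr u_p // IHk ?mulr0 ?addr0 // => i ik.
by rewrite u_p // ltnW.
Qed.

Lemma cg_r_of_p k : r k.+1 = (rho k.+1 / rho k) *: p k - p k.+1.
Proof. by rewrite cg_pS opprD opprK addrC subrK. Qed.

Lemma dotv_cg_r_eq0 u k : (forall i, (i <= k)%N -> dotv u (p i) = 0) ->
  forall i, (i <= k)%N -> dotv u (r i) = 0.
Proof.
move=> u_p [|i] ik; first by rewrite cg_r0 -[g]opprK -cg_p0 dotvNr u_p ?oppr0.
by rewrite cg_r_of_p dotvDr dotvNr dotvZr !u_p ?mulr0 ?subrr // ltnW.
Qed.

Lemma cg_dotv_rp k : (forall i, (i < k)%N -> dotv (r k) (p i) = 0) ->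
  dotv (r k) (p k) = - rho k.
Proof.
case: k => [|k] r_p; first by rewrite cg_r0 cg_p0 dotvNr.
by rewrite cg_pS dotvDr dotvNr dotvZr r_p // mulr0 addr0.
Qed.

Definition cg_nondegenerate k := forall i, (i < k)%N -> 0 < pAp i /\ 0 < rho i.

Lemma cg_nondegenerateW k : cg_nondegenerate k.+1 -> cg_nondegenerate k.
Proof. by move=> ndk i ik; apply: ndk; rewrite ltnW. Qed.

Lemma cg_orthogonal k : cg_nondegenerate k ->
  forall i, (i < k)%N -> dotv (r k) (p i) = 0 /\ dotv (p k) (A *m p i) = 0.
Proof.
elim: k => [//|k IHk] ndk1.
have [pAp_gt0 rho_gt0] := ndk1 k (ltnSn k).
have {}IHk := IHk (cg_nondegenerateW ndk1).
have r_p i (ik : (i < k)%N) := (IHk i ik).1.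
have p_Ap i (ik : (i < k)%N) := (IHk i ik).2.
have r_pk : dotv (r k) (p k) = - rho k by apply: cg_dotv_rp => i /r_p.
have rS_p : forall j, (j <= k)%N -> dotv (r k.+1) (p j) = 0.
  move=> j; rewrite leq_eqVlt => /predU1P[-> | jk].
    by rewrite cg_rS dotvDl dotvZl r_pk (dotvC (A *m p k)) divfK ?gt_eqF // addNr.
  rewrite cg_rS dotvDl dotvZl r_p // (dotvC (A *m p k)) dotv_Heps.
  by rewrite (p_Ap j) // mulr0 addr0.
have rS_r := dotv_cg_r_eq0 rS_p.
have pS_Ap : forall j, (j <= k)%N -> dotv (p k.+1) (A *m p j) = 0.
  move=> j jk; have [pApj_gt0 rhoj_gt0] := ndk1 j jk.
  have Apj : A *m p j = (alpha j)^-1 *: (r j.+1 - r j).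
    rewrite cg_rS addrAC subrr add0r scalerA mulVf ?scale1r //.
    by rewrite mulf_neq0 ?invr_eq0 ?gt_eqF.
  rewrite cg_pS dotvDl dotvNl dotvZl.
  move: jk Apj; rewrite leq_eqVlt => /predU1P[-> | jk] Apj; last first.
    rewrite (p_Ap j) // mulr0 addr0 Apj dotvZr dotvDr dotvNr.
    by rewrite !rS_r ?(ltnW jk) // subrr mulr0 oppr0.
  rewrite Apj !dotvZr !dotvDr !dotvNr (rS_r k) // (dotvC (p k) (r k.+1)) rS_p //.
  by rewrite (dotvC (p k) (r k)) r_pk subr0 sub0r opprK mulrCA divfK ?gt_eqF // addNr.
by split; [apply: rS_p | apply: pS_Ap].
Qed.

Section Invariants.
Variable k : nat.
Hypothesis ndk : cg_nondegenerate k.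

Lemma cg_dotv_ry : dotv (r k) (y k) = 0.
Proof. by apply: dotv_cg_y_eq0 => i /(cg_orthogonal ndk) []. Qed.

Lemma cg_dotv_pAy : dotv (p k) (A *m y k) = 0.
Proof.
rewrite dotv_trmx trmx_Heps; apply: dotv_cg_y_eq0 => i ik.
by rewrite dotvC dotv_Heps; case: (cg_orthogonal ndk ik).
Qed.

Lemma cg_dotv_gy : dotv g (y k) = - dotv (y k) (A *m y k).
Proof. by rewrite -[g](addrK (A *m y k)) -cg_rE dotvDl cg_dotv_ry dotvNl add0r dotvC. Qed.

Lemma cg_dotv_gp : dotv g (p k) = - rho k.
Proof.
rewrite -[g](addrK (A *m y k)) -cg_rE dotvDl dotvNl (dotvC (A *m y k)) cg_dotv_pAy subr0.
by apply: cg_dotv_rp => i /(cg_orthogonal ndk) [].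
Qed.

End Invariants.

Lemma cg_dotv_yAy_ge0 k : cg_nondegenerate k -> 0 <= dotv (y k) (A *m y k).
Proof.
elim: k => [|k IHk] ndk1; first by rewrite cg_y0 dotv0l.
have ndk := cg_nondegenerateW ndk1.
rewrite cg_yS dotvDZ ?trmx_Heps // cg_dotv_pAy // mulr0 addr0.
by rewrite addr_ge0 ?IHk // mulr_ge0 ?sqr_ge0 // ltW // (ndk1 k _).1.
Qed.

Lemma cg_dotv_yp_ge0 k : cg_nondegenerate k -> 0 <= dotv (y k) (p k).
Proof.
elim: k => [|k IHk] ndk1; first by rewrite cg_y0 dotv0l.
have ndk := cg_nondegenerateW ndk1.
have [pAp_gt0 _] := ndk1 k (ltnSn k).
rewrite [p k.+1]cg_pS dotvDr dotvNr dotvZr dotvC cg_dotv_ry // oppr0 add0r.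
rewrite cg_yS dotvDl dotvZl mulr_ge0 ?divr_ge0 ?dotvv_ge0 //.
by rewrite addr_ge0 ?IHk // mulr_ge0 ?divr_ge0 ?dotvv_ge0 // ltW.
Qed.

Lemma cg_boundary_sigma_le k (sigma : R) :
  cg_nondegenerate k -> 0 < pAp k -> 0 <= sigma ->
  normv (y k + sigma *: p k) <= normv (y k.+1) -> sigma * pAp k <= rho k.
Proof.
move=> ndk pAp_gt0 sigma_ge0 le_norm.
have alpha_ge0 : 0 <= alpha k by rewrite divr_ge0 ?dotvv_ge0 // ltW.
suff /(ler_wpM2r (ltW pAp_gt0)) : sigma <= alpha k by rewrite divfK ?lt0r_neq0.
have P_gt0 : 0 < dotv (p k) (p k).
  by rewrite dotvv_gt0; apply: contraTneq pAp_gt0 => ->; rewrite dotv0l ltxx.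
have py_ge0 : 0 <= dotv (p k) (y k) by rewrite dotvC cg_dotv_yp_ge0.
move: le_norm; rewrite cg_yS -ler_sqr ?nnegrE ?normv_ge0 // !normv_sqr !dotvvDZ !expr2.
case: (lerP sigma (alpha k)) => // lt_alpha.
have diff_gt0 : 0 < sigma - alpha k by rewrite subr_gt0.
have sum_gt0 : 0 < sigma + alpha k by lra.
have := mulr_ge0 (ltW diff_gt0) py_ge0; have := mulr_gt0 diff_gt0 (mulr_gt0 sum_gt0 P_gt0).
lra.
Qed.

Lemma dotv_HepsE u : dotv u (H *m u) = dotv u (A *m u) - 2 * eps * dotv u u.
Proof. by rewrite mulmxDl mul_scalar_mx dotvDr dotvZr addrK. Qed.

Hypothesis eps_gt0 : 0 < eps.

Lemma cg_model_decrease k (sigma : R) s : cg_nondegenerate k -> 0 <= sigma ->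
  pAp k <= eps * normv (p k) ^+ 2 \/ sigma * pAp k <= rho k ->
  s = y k + sigma *: p k ->
  dotv g s + 2^-1 * dotv s (H *m s) <= - (2^-1 * eps * normv s ^+ 2).
Proof.
move=> ndk sigma_ge0 curv ->.
have gs : dotv g (y k + sigma *: p k) = - dotv (y k) (A *m y k) - sigma * rho k.
  by rewrite dotvDr dotvZr cg_dotv_gy // cg_dotv_gp // mulrN.
have sAs : dotv (y k + sigma *: p k) (A *m (y k + sigma *: p k))
    = dotv (y k) (A *m y k) + sigma ^+ 2 * pAp k.
  by rewrite dotvDZ ?trmx_Heps // cg_dotv_pAy // mulr0 addr0.
have ss_ge : sigma ^+ 2 * dotv (p k) (p k)
    <= dotv (y k + sigma *: p k) (y k + sigma *: p k).
  by rewrite dotvvDZ lerDr addr_ge0 ?dotvv_ge0 // !mulr_ge0 // dotvC cg_dotv_yp_ge0.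
rewrite normv_sqr dotv_HepsE gs sAs.
have yAy_ge0 := cg_dotv_yAy_ge0 ndk; have rho_ge0 := dotvv_ge0 (r k).
have P_ge0 := dotvv_ge0 (p k).
have eS_ge0 : 0 <= eps * dotv (y k + sigma *: p k) (y k + sigma *: p k).
  by rewrite mulr_ge0 ?dotvv_ge0 // ltW.
have := mulr_ge0 sigma_ge0 rho_ge0.
case: curv => [|sigma_pAp].
  rewrite normv_sqr => pAp_le.
  have := ler_wpM2l (sqr_ge0 sigma) pAp_le; have := ler_wpM2l (ltW eps_gt0) ss_ge.
  lra.
have : sigma ^+ 2 * pAp k <= sigma * rho k by rewrite expr2 -mulrA ler_wpM2l.
lra.
Qed.

Lemma cg_ynextE k : cg_ynext H eps (st k) = y k.+1.
Proof. by rewrite cg_stateS. Qed.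

Lemma cg_rnextE k : cg_rnext H eps (st k) = r k.+1.
Proof. by rewrite cg_stateS. Qed.

Variables (delta zeta : R).
Hypotheses (g_neq0 : g != 0) (zeta_gt0 : 0 < zeta).
Local Notation no_stop k := (no_stop g H eps delta zeta (cg_iter g H eps k)).

Lemma cg_pAp_gt0_of_not_neg k : ~ test_neg H eps (st k) -> 0 < pAp k.
Proof.
move/negP; rewrite -ltNge; apply: le_lt_trans.
by rewrite mulr_ge0 ?sqr_ge0 // ltW.
Qed.

Lemma cg_rho_gt0 k : (forall i, (i < k)%N -> no_stop i) -> 0 < rho k.
Proof.
case: k => [_ | k no_stop_k]; first by rewrite cg_r0 dotvv_gt0.
have [_ [_ /negP]] := no_stop_k k (ltnSn k).
rewrite /test_res -cg_stateE cg_rnextE cg_ynextE -ltNge -normv_sqr => /(le_lt_trans _) lt_r.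
rewrite exprn_gt0 // lt_r // mulr_ge0 ?divr_ge0 ?(ltW zeta_gt0) //.
by rewrite le_min normv_ge0 mulr_ge0 ?normv_ge0 ?(ltW eps_gt0).
Qed.

Lemma cg_nondegenerate_of_no_stop k :
  (forall i, (i < k)%N -> no_stop i) -> cg_nondegenerate k.
Proof.
move=> no_stop_k i ik; split.
  by apply: cg_pAp_gt0_of_not_neg; rewrite cg_stateE; case: (no_stop_k i ik).
by apply: cg_rho_gt0 => j ji; apply: no_stop_k (ltn_trans ji ik).
Qed.

Lemma alg2_returns_cg_step kmax s : alg2_returns g H eps delta zeta kmax s ->
  exists k (sigma : R), [/\ cg_nondegenerate k, 0 <= sigma, s = y k + sigma *: p k &
    pAp k <= eps * normv (p k) ^+ 2 \/ sigma * pAp k <= rho k].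
Proof.
case=> [[k [_ [no_stop_k stop]]] | [no_stop_kmax ->]]; last first.
  exists kmax, 0; rewrite -cg_stateE scale0r addr0 mul0r.
  by split; [exact: cg_nondegenerate_of_no_stop | | | right; exact: dotvv_ge0].
have ndk := cg_nondegenerate_of_no_stop no_stop_k.
move: stop; rewrite /stop_with -cg_stateE.
case=> [[neg [sigma [sigma_ge0 [-> _]]]] |
        [[not_neg [bnd [sigma [sigma_ge0 [-> norm_s]]]]] | [not_neg [_ [_ ->]]]]].
- by exists k, sigma; split=> //; left.
- exists k, sigma; split=> //; right.
  apply: cg_boundary_sigma_le => //; first exact: cg_pAp_gt0_of_not_neg.
  by rewrite norm_s -cg_ynextE.
- have pAp_gt0 := cg_pAp_gt0_of_not_neg not_neg.
  exists k, (alpha k); rewrite cg_ynextE cg_yS divr_ge0 ?dotvv_ge0 ?(ltW pAp_gt0) //.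
  by split=> //; right; rewrite divfK ?lt0r_neq0.
Qed.

End ConjugateGradient.

Theorem lemma3p3 (R : rcfType) (n : nat) (g : 'cV[R]_n) (H : 'M[R]_n)
  (eps delta zeta : R) (kmax : nat) (s : 'cV[R]_n) :
  g != 0 -> H^T = H -> 0 < eps -> 0 < delta -> 0 < zeta < 1 -> (kmax <= n)%N ->
  alg2_returns g H eps delta zeta kmax s ->
  dotv g s + 2^-1 * dotv s (H *m s) <= - (2^-1 * eps * normv s ^+ 2).
Proof.
move=> g_neq0 symH eps_gt0 _ /andP[zeta_gt0 _] _.
case/(alg2_returns_cg_step symH eps_gt0 g_neq0 zeta_gt0).
move=> k [sigma [ndk sigma_ge0 s_def curv]].
exact: cg_model_decrease ndk sigma_ge0 curv s_def.
Qed.
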